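(* Let $G$ be a multiplicative monoid with identity, let $N$ be a $G$-graded near-ring, and let $P$ be a graded weakly prime ideal of $N$. If $P$ is not a graded prime ideal of $N$, then $P^2 \cap N = \{0\}$.
   Context: A near-ring $(N,+,\cdot)$ is a set with two binary operations such that $(N,+)$ is a group (not necessarily abelian), $(N,\cdot)$ is a semigroup, and $(a+b)y = ay+by$ for all $a,b,y\in N$. For a multiplicative monoid $G$ with identity, $N$ is a $G$-graded near-ring if there is a family $\{N_\sigma\}_{\sigma\in G}$ of additive normal subgroups of $N$ with $N=\bigoplus_{\sigma\in G}N_\sigma$ and $N_\sigma N_\tau\subseteq N_{\sigma\tau}$ for all $\sigma,\tau\in G$. An ideal $P$ of $N$ is graded if $P=\bigoplus_{\sigma\in G}(P\cap N_\sigma)$. For ideals $I,J$, $IJ$ denotes their product, and $P^2=PP$ (the paper writes $P^2\cap N$). A graded ideal $P$ is graded prime if for all graded ideals $I,J$ of $N$ with $IJ\subseteq P$, either $I\subseteq P$ or $J\subseteq P$. A graded ideal $P$ is graded weakly prime if for all graded ideals $I,J$ of $N$ with $\{0\}\neq IJ\subseteq P$, either $I\subseteq P$ or $J\subseteq P$. *)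

From Stdlib Require Import List.
Import ListNotations.

Record Monoid := {
  mcar :> Type;
  mop : mcar -> mcar -> mcar;
  mone : mcar;
  mopA : forall a b c, mop a (mop b c) = mop (mop a b) c;
  mop1l : forall a, mop mone a = a;
  mop1r : forall a, mop a mone = a
}.

Record NearRing := {
  ncar :> Type;
  nadd : ncar -> ncar -> ncar;
  nopp : ncar -> ncar;
  nzero : ncar;
  nmul : ncar -> ncar -> ncar;
  naddA : forall a b c, nadd a (nadd b c) = nadd (nadd a b) c;
  nadd0l : forall a, nadd nzero a = a;
  nadd0r : forall a, nadd a nzero = a;
  naddNl : forall a, nadd (nopp a) a = nzero;
  naddNr : forall a, nadd a (nopp a) = nzero;
  nmulA : forall a b c, nmul a (nmul b c) = nmul (nmul a b) c;
  nmulDl : forall a b y, nmul (nadd a b) y = nadd (nmul a y) (nmul b y)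
}.

Section NearRingDefs.
Variable N : NearRing.

Definition nset := N -> Prop.

Definition nsum (l : list N) : N := fold_right (nadd N) (nzero N) l.

Definition add_subgroup (S : nset) : Prop :=
  S (nzero N) /\
  (forall x y, S x -> S y -> S (nadd N x y)) /\
  (forall x, S x -> S (nopp N x)).

Definition add_normal_subgroup (S : nset) : Prop :=
  add_subgroup S /\
  (forall n x, S x -> S (nadd N (nadd N n x) (nopp N n))).

(* Ideal of a (right) near-ring (Pilz): a normal subgroup I of (N,+) with
   I N ⊆ I and n(n'+i) - n n' ∈ I for all n, n' ∈ N, i ∈ I. *)
Definition nideal (I : nset) : Prop :=
  add_normal_subgroup I /\
  (forall i n, I i -> I (nmul N i n)) /\
  (forall n n' i, I i -> I (nadd N (nmul N n (nadd N n' i)) (nopp N (nmul N n n')))).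

Definition ideal_prod (I J : nset) : nset :=
  fun x => exists i j, I i /\ J j /\ x = nmul N i j.

Definition subset (A B : nset) : Prop := forall x, A x -> B x.

Variable G : Monoid.

(* N is a G-graded near-ring with homogeneous components Nf σ:
   each Nf σ is an additive normal subgroup, N = ⊕_σ Nf σ (internal direct
   sum: N is generated by the Nf σ and each Nf σ meets the subgroup generated
   by the other components trivially), and Nf σ Nf τ ⊆ Nf (στ). *)
Definition graded_nearring (Nf : G -> nset) : Prop :=
  (forall s, add_normal_subgroup (Nf s)) /\
  (forall x : N, exists l : list (G * N),
      (forall p, In p l -> Nf (fst p) (snd p)) /\ x = nsum (map snd l)) /\
  (forall (s : G) (x : N) (l : list (G * N)),
      Nf s x ->
      (forall p, In p l -> fst p <> s /\ Nf (fst p) (snd p)) ->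
      x = nsum (map snd l) -> x = nzero N) /\
  (forall s t x y, Nf s x -> Nf t y -> Nf (mop G s t) (nmul N x y)).

(* Graded ideal: P = ⊕_σ (P ∩ Nf σ). *)
Definition graded_ideal (Nf : G -> nset) (P : nset) : Prop :=
  nideal P /\
  (forall x, P x -> exists l : list (G * N),
      (forall p, In p l -> P (snd p) /\ Nf (fst p) (snd p)) /\
      x = nsum (map snd l)).

Definition graded_prime (Nf : G -> nset) (P : nset) : Prop :=
  graded_ideal Nf P /\
  forall I J, graded_ideal Nf I -> graded_ideal Nf J ->
    subset (ideal_prod I J) P -> subset I P \/ subset J P.

Definition graded_weakly_prime (Nf : G -> nset) (P : nset) : Prop :=
  graded_ideal Nf P /\
  forall I J, graded_ideal Nf I -> graded_ideal Nf J ->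
    (exists x, ideal_prod I J x /\ x <> nzero N) ->
    subset (ideal_prod I J) P -> subset I P \/ subset J P.

End NearRingDefs.

(* If p q <> 0 for some p, q in P, then P is graded prime.  Given graded
   ideals I, J with I J ⊆ P, the graded ideals I + P and J + P still have
   their product in P, because (i + p)(j + q) = [i(j + q) - i j] + i j + p(j + q)
   and the bracket lies in P by the ideal axiom n(n' + q) - n n' ∈ P.  That
   product contains p q <> 0, so weak primeness gives I + P ⊆ P or J + P ⊆ P. *)
From Stdlib Require Import List Classical.

Section NearRingGroup.
Variable N : NearRing.

Local Notation "0" := (nzero N).
Local Notation "a + b" := (nadd N a b).
Local Notation "- a" := (nopp N a).
Local Notation "a * b" := (nmul N a b).

Lemma naddI (a b c : N) : a + b = a + c -> b = c.
Proof.
  intro E.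
  rewrite <- (nadd0l N b), <- (nadd0l N c), <- (naddNl N a), <- !naddA, E.
  reflexivity.
Qed.

Lemma naddNKr (a b : N) : b + - a + a = b.
Proof. rewrite <- naddA, naddNl, nadd0r. reflexivity. Qed.

Lemma noppK (a : N) : - - a = a.
Proof. apply (naddI (- a)). rewrite naddNr, naddNl. reflexivity. Qed.

Lemma noppD (a b : N) : - (a + b) = - b + - a.
Proof.
  apply (naddI (a + b)).
  rewrite naddNr, naddA, <- (naddA N a b), naddNr, nadd0r, naddNr.
  reflexivity.
Qed.

Lemma nmul0l (y : N) : 0 * y = 0.
Proof. apply (naddI (0 * y)). rewrite <- nmulDl, !nadd0r. reflexivity. Qed.

Lemma nsum_app (l1 l2 : list N) : nsum N (l1 ++ l2) = nsum N l1 + nsum N l2.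
Proof.
  induction l1 as [|a l IH]; cbn.
  - rewrite nadd0l. reflexivity.
  - unfold nsum in *. rewrite IH, naddA. reflexivity.
Qed.

End NearRingGroup.

Section Ideals.
Variable N : NearRing.

Local Notation "0" := (nzero N).
Local Notation "a + b" := (nadd N a b).
Local Notation "- a" := (nopp N a).
Local Notation "a * b" := (nmul N a b).

Definition ideal_sum (I J : nset N) : nset N :=
  fun x => exists i j, I i /\ J j /\ x = i + j.

Section IdealFacts.
Variable I : nset N.
Hypothesis HI : nideal N I.

Lemma ideal0 : I 0.
Proof. apply HI. Qed.

Lemma idealD (x y : N) : I x -> I y -> I (x + y).
Proof. apply HI. Qed.

Lemma idealN (x : N) : I x -> I (- x).
Proof. apply HI. Qed.

Lemma idealJ (n x : N) : I x -> I (n + x + - n).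
Proof. apply HI. Qed.

Lemma idealMr (x n : N) : I x -> I (x * n).
Proof. apply HI. Qed.

Lemma idealMl_shift (n n' x : N) : I x -> I (n * (n' + x) + - (n * n')).
Proof. apply HI. Qed.

End IdealFacts.

Lemma ideal_suml (I J : nset N) : nideal N J -> subset N I (ideal_sum I J).
Proof.
  intros HJ x Hx. exists x, 0.
  split; [exact Hx | split; [apply ideal0, HJ | rewrite nadd0r; reflexivity]].
Qed.

Lemma ideal_sumr (I J : nset N) : nideal N I -> subset N J (ideal_sum I J).
Proof.
  intros HI x Hx. exists 0, x.
  split; [apply ideal0, HI | split; [exact Hx | rewrite nadd0l; reflexivity]].
Qed.

(* Addition need not commute, so each witness moves an element of J past one of
   I by conjugation, which J absorbs by normality. *)
Lemma nideal_sum (I J : nset N) : nideal N I -> nideal N J -> nideal N (ideal_sum I J).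
Proof.
  intros HI HJ.
  split; [split; [split; [|split]|] | split].
  - apply ideal_sumr; [exact HI | apply ideal0, HJ].
  - intros x y [i [j [Hi [Hj ->]]]] [i' [j' [Hi' [Hj' ->]]]].
    exists (i + i'), (- i' + j + - - i' + j').
    split; [apply (idealD _ HI); auto | split].
    + apply (idealD _ HJ); [apply (idealJ _ HJ) |]; auto.
    + rewrite noppK, !naddA, <- (naddA N i i'), naddNr, nadd0r. reflexivity.
  - intros x [i [j [Hi [Hj ->]]]].
    exists (- i), (i + - j + - i).
    split; [apply (idealN _ HI); auto | split].
    + apply (idealJ _ HJ), (idealN _ HJ); auto.
    + rewrite noppD, !naddA, naddNl, nadd0l. reflexivity.
  - intros n x [i [j [Hi [Hj ->]]]].
    exists (n + i + - n), (n + j + - n).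
    split; [apply (idealJ _ HI); auto | split; [apply (idealJ _ HJ); auto |]].
    rewrite !naddA, naddNKr. reflexivity.
  - intros x n [i [j [Hi [Hj ->]]]].
    exists (i * n), (j * n).
    split; [apply (idealMr _ HI); auto | split; [apply (idealMr _ HJ); auto | apply nmulDl]].
  - intros n n' x [i [j [Hi [Hj ->]]]].
    set (a := n * (n' + i) + - (n * n')).
    set (b := n * (n' + i + j) + - (n * (n' + i))).
    exists a, (- a + b + - - a).
    split; [apply (idealMl_shift _ HI); auto | split].
    + apply (idealJ _ HJ), (idealMl_shift _ HJ); auto.
    + rewrite noppK, !naddA, naddNr, nadd0l.
      unfold a, b. rewrite naddA, naddNKr. reflexivity.
Qed.

Lemma ideal_prod0 (I J : nset N) : nideal N I -> nideal N J -> ideal_prod N I J 0.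
Proof.
  intros HI HJ. exists 0, 0.
  split; [apply ideal0, HI | split; [apply ideal0, HJ | symmetry; apply nmul0l]].
Qed.

Lemma ideal_prodS (I I' J J' : nset N) :
  subset N I I' -> subset N J J' -> subset N (ideal_prod N I J) (ideal_prod N I' J').
Proof. intros HI HJ y [i [j [Hi [Hj ->]]]]. exists i, j. auto. Qed.

Lemma ideal_prod_sum_sub (P I J : nset N) : nideal N P ->
  subset N (ideal_prod N I J) P ->
  subset N (ideal_prod N (ideal_sum I P) (ideal_sum J P)) P.
Proof.
  intros HP HIJ y [a [b [[i [p [Hi [Hp ->]]]] [[j [q [Hj [Hq ->]]]] ->]]]].
  rewrite nmulDl, <- (naddNKr N (i * j) (i * (j + q))).
  apply idealD; [exact HP | | apply idealMr; auto].
  apply idealD; [exact HP | apply idealMl_shift; auto |].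
  apply HIJ. exists i, j. auto.
Qed.

Variable G : Monoid.
Variable Nf : G -> nset N.

Lemma graded_ideal_sum (I J : nset N) :
  graded_ideal N G Nf I -> graded_ideal N G Nf J -> graded_ideal N G Nf (ideal_sum I J).
Proof.
  intros [HI GI] [HJ GJ]. split; [apply nideal_sum; auto |].
  intros x [i [j [Hi [Hj ->]]]].
  destruct (GI i Hi) as [li [Hli ->]], (GJ j Hj) as [lj [Hlj ->]].
  exists (li ++ lj). split.
  - intros c Hc. apply in_app_or in Hc as [Hc | Hc].
    + destruct (Hli c Hc). split; [apply ideal_suml|]; auto.
    + destruct (Hlj c Hc). split; [apply ideal_sumr|]; auto.
  - rewrite map_app, nsum_app. reflexivity.
Qed.

Lemma graded_weakly_prime_prime (P : nset N) :
  graded_weakly_prime N G Nf P ->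
  (exists x, ideal_prod N P P x /\ x <> 0) -> graded_prime N G Nf P.
Proof.
  intros [GP HW] [x [HxPP Hx0]]. split; [exact GP |].
  pose proof (proj1 GP) as HP.
  intros I J GI GJ HIJ.
  assert (HPP : subset N (ideal_prod N P P) (ideal_prod N (ideal_sum I P) (ideal_sum J P))).
  { apply ideal_prodS; apply ideal_sumr; [apply GI | apply GJ]. }
  destruct (HW (ideal_sum I P) (ideal_sum J P)) as [HIP | HJP].
  - apply graded_ideal_sum; auto.
  - apply graded_ideal_sum; auto.
  - exists x. split; [apply HPP |]; assumption.
  - apply ideal_prod_sum_sub; auto.
  - left. intros y Hy. apply HIP, ideal_suml; auto.
  - right. intros y Hy. apply HJP, ideal_suml; auto.
Qed.

End Ideals.

Theorem theorem1 (G : Monoid) (N : NearRing) (Nf : G -> nset N)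
  (HN : graded_nearring N G Nf) (P : nset N)
  (HP : graded_weakly_prime N G Nf P)
  (Hnp : ~ graded_prime N G Nf P) :
  forall x : N, ideal_prod N P P x <-> x = nzero N.
Proof.
  pose proof (proj1 (proj1 HP)) as HPi.
  intro x. split.
  - intro HxPP. apply NNPP. intro Hx0.
    apply Hnp, graded_weakly_prime_prime; [exact HP |].
    exists x. auto.
  - intros ->. apply ideal_prod0; exact HPi.
Qed.
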